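(* Let $L\in\mathbb{R}^{n\times n}$ be the Laplacian of an undirected unweighted graph on $n$ nodes, let $s \in \mathbb{R}^n$ be a mean-zero innate opinion vector and $z = (I+L)^{-1}s$. Let $(u,v)$ be an edge of the graph, $E = \chi_{u,v}\chi_{u,v}^T$ its edge Laplacian, and $\delta = z(u)-z(v)$. Then $$PD(L-E) \ge PD(L) + \delta^2.$$
   Context: $\chi_{u,v}\in\mathbb{R}^n$ is the vector with $1$ in coordinate $u$, $-1$ in coordinate $v$ and $0$ elsewhere. Friedkin–Johnsen model: expressed opinions $z=(I+L)^{-1}s$. With $s$ fixed, the polarization+disagreement of a graph with Laplacian $M$ is $PD(M) = s^T (I+M)^{-1} s$. *)

From mathcomp Require Import all_boot all_order all_algebra.
Set Implicit Arguments. Unset Strict Implicit. Unset Printing Implicit Defensive.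
Import Order.TTheory GRing.Theory Num.Theory.
Local Open Scope ring_scope.

Definition simple_graph (n : nat) (e : rel 'I_n) : Prop :=
  symmetric e /\ irreflexive e.

Definition laplacian (R : ringType) (n : nat) (e : rel 'I_n) : 'M[R]_n :=
  \matrix_(i, j) (if i == j then (#|[set k | e i k]|)%:R
                  else if e i j then -1 else 0).

Definition chi (R : ringType) (n : nat) (u v : 'I_n) : 'cV[R]_n :=
  \col_i ((i == u)%:R - (i == v)%:R).

Definition fj_opinions (R : comUnitRingType) (n : nat) (L : 'M[R]_n)
  (s : 'cV[R]_n) : 'cV[R]_n := invmx (1%:M + L) *m s.

Definition PD (R : comUnitRingType) (n : nat) (s : 'cV[R]_n) (M : 'M[R]_n) : R :=
  (s^T *m invmx (1%:M + M) *m s) ord0 ord0.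

(* Put A := I + L - E and B := A + E = I + L, so z = B^-1 s and s = A z + delta chi.
   Then A^-1 s = z + delta A^-1 chi, and expanding with the symmetry of A gives
     s^T A^-1 s = s^T B^-1 s + delta^2 + delta^2 chi^T A^-1 chi.
   The last term is nonnegative because A is positive semidefinite: removing an
   edge from the Laplacian keeps it positive semidefinite, since the edge term
   (x u - x v)^2 is one of the nonnegative summands of x^T L x. *)
From mathcomp Require Import all_boot all_order all_algebra.
From mathcomp.algebra_tactics Require Import ring lra.
Import Order.TTheory GRing.Theory Num.Theory.
Local Open Scope ring_scope.

Section QuadraticForms.
Context {R : realFieldType} {n : nat}.
Implicit Types (K A : 'M[R]_n) (x y c s : 'cV[R]_n).

Definition qform K x : R := (x^T *m K *m x) 0 0.

Definition psdmx K : Prop := forall x, 0 <= qform K x.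

Lemma qform_sum K x : qform K x = \sum_i \sum_j x i 0 * K i j * x j 0.
Proof.
rewrite /qform mxE exchange_big /=; apply: eq_bigr => j _.
by rewrite mxE big_distrl /=; apply: eq_bigr => i _; rewrite !mxE.
Qed.

Lemma qform1 x : qform 1%:M x = \sum_i x i 0 ^+ 2.
Proof. by rewrite /qform mulmx1 mxE; apply: eq_bigr => i _; rewrite !mxE expr2. Qed.

Lemma qformD K1 K2 x : qform (K1 + K2) x = qform K1 x + qform K2 x.
Proof. by rewrite /qform mulmxDr mulmxDl mxE. Qed.

Lemma qformB K1 K2 x : qform (K1 - K2) x = qform K1 x - qform K2 x.
Proof. by rewrite /qform mulmxBr mulmxBl !mxE. Qed.

Lemma qform_rank1 c x : qform (c *m c^T) x = ((c^T *m x) 0 0) ^+ 2.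
Proof.
rewrite /qform !mulmxA -mulmxA -[x^T *m c]trmxK trmx_mul trmxK.
by rewrite mxE big_ord1 !mxE expr2.
Qed.

Lemma bilin_tr K x y : (x^T *m K *m y) 0 0 = (y^T *m K^T *m x) 0 0.
Proof.
suff -> : x^T *m K *m y = (y^T *m K^T *m x)^T by rewrite mxE.
by rewrite !trmx_mul !trmxK mulmxA.
Qed.

Lemma psdmx1 : psdmx 1%:M.
Proof. by move=> x; rewrite qform1 sumr_ge0 // => i _; rewrite sqr_ge0. Qed.

Lemma psdmxD K1 K2 : psdmx K1 -> psdmx K2 -> psdmx (K1 + K2).
Proof. by move=> h1 h2 x; rewrite qformD addr_ge0. Qed.

Lemma psdmx_rank1 c : psdmx (c *m c^T).
Proof. by move=> x; rewrite qform_rank1 sqr_ge0. Qed.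

Lemma psdmx_inv A : A^T = A -> A \in unitmx -> psdmx A -> psdmx (invmx A).
Proof.
move=> symA unitA psdA x; have := psdA (invmx A *m x).
by rewrite /qform trmx_mul trmx_inv symA -!mulmxA mulKVmx.
Qed.

Lemma unitmx_1D_psd K : psdmx K -> (1%:M + K) \in unitmx.
Proof.
move=> psdK; rewrite -unitmx_tr -row_free_unit; apply/inj_row_free => y y_ker.
have ker_y : (1%:M + K) *m y^T = 0.
  by apply/trmx_inj; rewrite trmx_mul trmxK y_ker trmx0.
have : qform (1%:M + K) y^T = 0 by rewrite /qform -mulmxA ker_y mulmx0 mxE.
rewrite qformD qform1 => sum_eq0.
have sq_sum_eq0 : \sum_i y^T i 0 ^+ 2 = 0.
  have := psdK y^T; have : 0 <= \sum_i y^T i 0 ^+ 2.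
    by rewrite sumr_ge0 // => i _; rewrite sqr_ge0.
  lra.
apply/rowP => j.
have := psumr_eq0P (fun i _ => sqr_ge0 (y^T i 0)) sq_sum_eq0 (i := j) isT.
by rewrite !mxE => /eqP; rewrite sqrf_eq0 => /eqP.
Qed.

(* Sherman-Morrison, in quadratic-form shape. *)
Lemma qform_inv_rank1_update A c s : A^T = A -> A \in unitmx ->
  (A + c *m c^T) \in unitmx ->
  let d := (c^T *m (invmx (A + c *m c^T) *m s)) 0 0 in
  qform (invmx A) s = qform (invmx (A + c *m c^T)) s + d ^+ 2
                      + d ^+ 2 * qform (invmx A) c.
Proof.
move=> symA unitA unitB d; set z := invmx (A + c *m c^T) *m s.
have s_split : s = A *m z + d *: c.
  by rewrite -mul_mx_scalar -mx11_scalar (mulmxA c) -mulmxDl mulKVmx.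
have invA_s : invmx A *m s = z + d *: (invmx A *m c).
  by rewrite {1}s_split mulmxDr mulKmx // scalemxAr.
have sym_cross : (s^T *m (invmx A *m c)) 0 0 = (c^T *m (invmx A *m s)) 0 0.
  by rewrite !mulmxA bilin_tr trmx_inv symA.
rewrite /qform -!mulmxA -/z invA_s mulmxDr -scalemxAr [LHS]mxE [X in _ + X]mxE.
rewrite sym_cross invA_s mulmxDr -scalemxAr [X in d * X]mxE [X in d * (_ + X)]mxE -/d.
ring.
Qed.

Lemma qform_inv_rank1_ge A c s : A^T = A -> A \in unitmx -> psdmx A ->
  (A + c *m c^T) \in unitmx ->
  qform (invmx (A + c *m c^T)) s + ((c^T *m (invmx (A + c *m c^T) *m s)) 0 0) ^+ 2
  <= qform (invmx A) s.
Proof.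
move=> symA unitA psdA unitB.
rewrite (qform_inv_rank1_update A c s symA unitA unitB) /=.
by rewrite lerDl mulr_ge0 ?sqr_ge0 // psdmx_inv.
Qed.

End QuadraticForms.

Section Laplacian.
Context {R : realFieldType} {n : nat}.
Variable e : rel 'I_n.
Hypothesis graph_e : simple_graph e.

Lemma chi_tmulE (u v : 'I_n) (x : 'cV[R]_n) :
  ((chi R u v)^T *m x) 0 0 = x u 0 - x v 0.
Proof.
rewrite mxE; under eq_bigr => i _ do rewrite !mxE mulrBl.
rewrite sumrB (bigD1 u) //= eqxx mul1r big1 ?addr0; last first.
  by move=> i /negbTE ->; rewrite mul0r.
rewrite (bigD1 v) //= eqxx mul1r big1 ?addr0 // => i /negbTE ->.
by rewrite mul0r.
Qed.

Lemma laplacian_tr : (laplacian R e)^T = laplacian R e.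
Proof.
case: graph_e => sym_e _; apply/matrixP => i j; rewrite !mxE eq_sym.
by case: eqP => [->|_] //; rewrite sym_e.
Qed.

Lemma degreeE (i : 'I_n) : (#|[set k | e i k]|)%:R = \sum_k (e i k)%:R :> R.
Proof.
rewrite -sum1_card natr_sum big_mkcond /=; apply: eq_bigr => k _.
by rewrite inE; case: (e i k).
Qed.

Lemma qform_laplacian (x : 'cV[R]_n) :
  2 * qform (laplacian R e) x = \sum_i \sum_j (e i j)%:R * (x i 0 - x j 0) ^+ 2.
Proof.
case: graph_e => sym_e irr_e; rewrite qform_sum.
have rowE : \sum_i \sum_j x i 0 * laplacian R e i j * x j 0 =
            \sum_i \sum_j (e i j)%:R * (x i 0 ^+ 2 - x i 0 * x j 0).
  apply: eq_bigr => i _.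
  rewrite (bigD1 i) //= [RHS](bigD1 i) //= irr_e mul0r add0r !mxE eqxx degreeE.
  rewrite (bigD1 i) //= irr_e add0r mulr_sumr mulr_suml -big_split /=.
  apply: eq_bigr => j ji; rewrite !mxE eq_sym (negbTE ji).
  by case: (e i j); rewrite /= ?mulr1n ?mulr0n; ring.
have swapE : \sum_i \sum_j (e i j)%:R * (x i 0 ^+ 2 - x i 0 * x j 0) =
             \sum_i \sum_j (e i j)%:R * (x j 0 ^+ 2 - x j 0 * x i 0) :> R.
  by rewrite exchange_big; apply: eq_bigr => i _; apply: eq_bigr => j _; rewrite sym_e.
rewrite rowE mulr2n mulrDl mul1r {2}swapE -big_split; apply: eq_bigr => i _.
by rewrite -big_split; apply: eq_bigr => j _ /=; ring.
Qed.

Lemma edge_le_qform_laplacian (x : 'cV[R]_n) (u v : 'I_n) : e u v ->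
  (x u 0 - x v 0) ^+ 2 <= qform (laplacian R e) x.
Proof.
move=> e_uv; have := qform_laplacian x; case: graph_e => sym_e irr_e.
have u_neq_v : u != v by apply: contraTneq e_uv => ->; rewrite irr_e.
pose G i j : R := (e i j)%:R * (x i 0 - x j 0) ^+ 2.
have G_ge0 i j : 0 <= G i j by rewrite mulr_ge0 ?ler0n ?sqr_ge0.
have G_le_row i j : G i j <= \sum_k G i k.
  by rewrite (bigD1 j) //= lerDl sumr_ge0.
have rows_le : \sum_k G u k + \sum_k G v k <= \sum_i \sum_j G i j.
  rewrite [leRHS](bigD1 u) // [X in _ <= _ + X](bigD1 v) 1?eq_sym //.
  by rewrite addrA lerDl sumr_ge0 // => i _; rewrite sumr_ge0.
have := G_le_row u v; have := G_le_row v u.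
rewrite /G (sym_e v u) e_uv /= -/(G _ _) => Gvu Guv sumE.
have : (x v 0 - x u 0) ^+ 2 = (x u 0 - x v 0) ^+ 2 by ring.
lra.
Qed.

Lemma psdmx_laplacian_edge_removal (u v : 'I_n) : e u v ->
  psdmx (laplacian R e - chi R u v *m (chi R u v)^T).
Proof.
move=> e_uv x; rewrite qformB qform_rank1 chi_tmulE subr_ge0.
exact: edge_le_qform_laplacian.
Qed.

End Laplacian.

Theorem mainTheorem6 (R : realFieldType) (n : nat) (e : rel 'I_n)
  (s : 'cV[R]_n) (u v : 'I_n) :
  simple_graph e ->
  \sum_i s i ord0 = 0 ->
  e u v ->
  let L := laplacian R e in
  let E := chi R u v *m (chi R u v)^T in
  let z := fj_opinions L s in
  let delta := z u ord0 - z v ord0 in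
  PD s (L - E) >= PD s L + delta ^+ 2.
Proof.
move=> graph_e _ e_uv /=.
set L := laplacian R e; set E := chi R u v *m (chi R u v)^T.
have psdLE : psdmx (L - E) by apply: psdmx_laplacian_edge_removal.
set A := 1%:M + (L - E).
have psdA : psdmx A by apply: psdmxD => //; apply: psdmx1.
have symA : A^T = A.
  by rewrite /A !raddfD /= raddfN /= tr_scalar_mx trmx_mul trmxK laplacian_tr.
have AE : A + E = 1%:M + L by rewrite /A -addrA subrK.
have unitAE : A + E \in unitmx.
  by rewrite -addrA unitmx_1D_psd //; apply: psdmxD => //; apply: psdmx_rank1.
have := qform_inv_rank1_ge _ _ s symA (unitmx_1D_psd _ psdLE) psdA unitAE.
by rewrite chi_tmulE AE.
Qed.
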